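(* Let $\Gamma$ be a set of FOML formulas and $\varphi$ a FOML formula (as defined in the context). If $\Gamma^{\mathrm{ML}},\mathcal{H}(\Gamma\cup\{\varphi\})\models_{\mathrm{ML}}\varphi^{\mathrm{ML}}$, then $\Gamma\models\varphi$.
   Context: FOML syntax. Fix pairwise disjoint, non-empty, denumerable sets $\mathcal{X}$ (rigid variables), $\mathcal{V}$ (flexible variables) and $\mathcal{O}$ (operator symbols with arities). Expressions are given by $e ::= x \mid v \mid op(e,\ldots,e) \mid e=e \mid \mathrm{FALSE} \mid e\Rightarrow e \mid \forall x: e \mid \nabla e$ with $x\in\mathcal{X}$, $v\in\mathcal{V}$, $op\in\mathcal{O}$ applied with the correct arity. Terms and formulas are not distinguished. Only rigid variables are bound. An expression is rigid iff it contains no flexible variable and no subexpression of the form $\nabla e$. FOML semantics. A Kripke model is $\mathcal{M}=(\mathcal{I},\xi,\mathcal{W},R,\zeta,\nabla_\mathcal{M})$, where: - $\mathcal{I}$ is a first-order interpretation whose universe contains distinct values $\mathsf{tt},\mathsf{ff}$, with $\mathcal{I}(op):|\mathcal{I}|^n\to|\mathcal{I}|$; - $\xi:\mathcal{X}\to|\mathcal{I}|$; - $\mathcal{W}$ is a non-empty set of states and $R\subseteq\mathcal{W}^2$; - $\zeta:\mathcal{V}\times\mathcal{W}\to|\mathcal{I}|$; - $\nabla_\mathcal{M}:2^{|\mathcal{I}|}\to|\mathcal{I}|$ satisfies $\nabla_\mathcal{M}(S)=\mathsf{tt}$ iff $S\subseteq\{\mathsf{tt}\}$. Values $[\![e]\!]^\mathcal{M}_w$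 are defined as follows. - $[\![x]\!]_w=\xi(x)$ and $[\![v]\!]_w=\zeta(v,w)$. - $[\![op(\vec e)]\!]_w=\mathcal{I}(op)([\![e_1]\!]_w,\ldots)$. - $[\![e_1=e_2]\!]_w$ is $\mathsf{tt}$ iff the two values are equal, and $\mathsf{ff}$ otherwise. - $[\![\mathrm{FALSE}]\!]_w=\mathsf{ff}$. - $[\![\varphi\Rightarrow\psi]\!]_w=\mathsf{tt}$ iff $[\![\varphi]\!]_w\ne\mathsf{tt}$ or $[\![\psi]\!]_w=\mathsf{tt}$, and $\mathsf{ff}$ otherwise. - $[\![\forall x:\varphi]\!]^\mathcal{M}_w=\mathsf{tt}$ iff $[\![\varphi]\!]^{\mathcal{M}'}_w=\mathsf{tt}$ for all $\mathcal{M}'$ differing from $\mathcal{M}$ only at $\xi(x)$, and $\mathsf{ff}$ otherwise. - $[\![\nabla\varphi]\!]_w=\nabla_\mathcal{M}(\{[\![\varphi]\!]_{w'}:(w,w')\in R\})$. $\mathcal{M},w\models\varphi$ means $[\![\varphi]\!]^\mathcal{M}_w=\mathsf{tt}$. $\Gamma\models\varphi$ iff for every $\mathcal{M}$, if $\mathcal{M},w\models\psi$ for all $\psi\in\Gamma$ and all $w$, then $\mathcal{M},w\models\varphi$ for all $w$. Propositional modal logic ML. Formulas are built from propositional (flexible) variables, $\mathrm{FALSE}$, $\Rightarrow$ and $\nabla$. A Kripke model is $\mathcal{K}=(\mathcal{W},R,\zeta)$ with $\zeta$ assigning $\mathsf{tt}$ or $\mathsf{ff}$ to each variable at each state. The semantics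 is the standard one: $\nabla\varphi$ holds at $w$ iff $\varphi$ holds at every $w'$ with $(w,w')\in R$. $\Gamma\models_{\mathrm{ML}}\varphi$ iff for every $\mathcal{K}$, if every formula of $\Gamma$ holds at all states, then $\varphi$ holds at all states. Coalescing to ML. $e^{\mathrm{ML}}$ is defined by: - $x^{\mathrm{ML}}=[x]$ for $x\in\mathcal{X}$, and $v^{\mathrm{ML}}=v$ for $v\in\mathcal{V}$; - $op(t_1,\ldots,t_n)^{\mathrm{ML}}=[op(t_1,\ldots,t_n)]$; - $(e_1=e_2)^{\mathrm{ML}}=[e_1=e_2]$; - $\mathrm{FALSE}^{\mathrm{ML}}=\mathrm{FALSE}$; - $(e_1\Rightarrow e_2)^{\mathrm{ML}}=e_1^{\mathrm{ML}}\Rightarrow e_2^{\mathrm{ML}}$; - $(\forall x:e)^{\mathrm{ML}}=[\forall x:e]$; - $(\nabla e)^{\mathrm{ML}}=\nabla e^{\mathrm{ML}}$. Here each $[e]$ is a fresh propositional flexible variable, and variables $[e]$ and $[e']$ are identified iff $e$ and $e'$ are $\alpha$-equivalent. $\Gamma^{\mathrm{ML}}=\{\psi^{\mathrm{ML}}:\psi\in\Gamma\}$. For a set $\Delta$ of FOML formulas, $\mathcal{H}(\Delta)$ is the set of all formulas $[e]\Rightarrow\nabla[e]$ such that $[e]$ is a fresh variable introduced in $\Delta^{\mathrm{ML}}$ and $e$ is a rigid expression. *)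

From Stdlib Require Import List ClassicalEpsilon.
Import ListNotations.

(* Rigid variables, flexible variables and operator symbols are each
   indexed by nat (disjoint by construction); arities are given by a
   function [ar : nat -> nat]. *)
Inductive expr : Type :=
| ERig  (x : nat)
| EFlex (v : nat)
| EOp   (o : nat) (args : list expr)
| EEq   (e1 e2 : expr)
| EFalse
| EImp  (e1 e2 : expr)
| EAll  (x : nat) (e : expr)
| EBox  (e : expr).

Fixpoint wf (ar : nat -> nat) (e : expr) : Prop :=
  match e with
  | ERig _ | EFlex _ | EFalse => True
  | EOp o args => length args = ar o /\
      (fix wfl (l : list expr) : Prop :=
         match l with [] => True | a :: l' => wf ar a /\ wfl l' end) args
  | EEq a b | EImp a b => wf ar a /\ wf ar b
  | EAll _ a | EBox a => wf ar a
  end.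

Fixpoint rigid (e : expr) : Prop :=
  match e with
  | ERig _ | EFalse => True
  | EFlex _ | EBox _ => False
  | EOp _ args =>
      (fix rl (l : list expr) : Prop :=
         match l with [] => True | a :: l' => rigid a /\ rl l' end) args
  | EEq a b | EImp a b => rigid a /\ rigid b
  | EAll _ a => rigid a
  end.

Fixpoint varrel (env : list (nat * nat)) (x y : nat) : Prop :=
  match env with
  | [] => x = y
  | (a, b) :: env' => (x = a /\ y = b) \/ (x <> a /\ y <> b /\ varrel env' x y)
  end.

Fixpoint alpha_env (env : list (nat * nat)) (e1 e2 : expr) : Prop :=
  match e1, e2 with
  | ERig x, ERig y => varrel env x y
  | EFlex v, EFlex v' => v = v'
  | EOp o l1, EOp o' l2 => o = o' /\
      (fix al (l1 l2 : list expr) : Prop :=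
         match l1, l2 with
         | [], [] => True
         | a :: l1', b :: l2' => alpha_env env a b /\ al l1' l2'
         | _, _ => False
         end) l1 l2
  | EEq a b, EEq a' b' => alpha_env env a a' /\ alpha_env env b b'
  | EFalse, EFalse => True
  | EImp a b, EImp a' b' => alpha_env env a a' /\ alpha_env env b b'
  | EAll x a, EAll y b => alpha_env ((x, y) :: env) a b
  | EBox a, EBox b => alpha_env env a b
  | _, _ => False
  end.

Definition alpha_eq (e1 e2 : expr) : Prop := alpha_env [] e1 e2.

Record model : Type := {
  U : Type;
  tt : U;
  ff : U;
  tt_ff : tt <> ff;
  I : nat -> list U -> U;
  xi : nat -> U;
  W : Type;
  W_ne : inhabited W;
  R : W -> W -> Prop;
  zeta : nat -> W -> U;
  nab : (U -> Prop) -> U;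
  nab_spec : forall S : U -> Prop, nab S = tt <-> (forall u, S u -> u = tt)
}.

Definition dec (P : Prop) : {P} + {~ P} := excluded_middle_informative P.

Definition upd {A : Type} (f : nat -> A) (x : nat) (d : A) : nat -> A :=
  fun y => if Nat.eqb y x then d else f y.

Fixpoint eval (M : model) (e : expr) (s : nat -> U M) (w : W M) : U M :=
  match e with
  | ERig x => s x
  | EFlex v => zeta M v w
  | EOp o args => I M o (map (fun a => eval M a s w) args)
  | EEq a b => if dec (eval M a s w = eval M b s w) then tt M else ff M
  | EFalse => ff M
  | EImp a b =>
      if dec (eval M a s w <> tt M \/ eval M b s w = tt M) then tt M else ff M
  | EAll x a =>
      if dec (forall d : U M, eval M a (upd s x d) w = tt M) then tt M else ff M
  | EBox a => nab M (fun u => exists w', R M w w' /\ u = eval M a s w')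
  end.

Definition sat (M : model) (w : W M) (phi : expr) : Prop :=
  eval M phi (xi M) w = tt M.

Definition entails (Gamma : expr -> Prop) (phi : expr) : Prop :=
  forall M : model,
    (forall psi, Gamma psi -> forall w, sat M w psi) ->
    forall w, sat M w phi.

(* propositional variables: original flexible variables v, or fresh [e] *)
Inductive atom : Type :=
| AV (v : nat)
| AB (e : expr).

Inductive mform : Type :=
| MVar (a : atom)
| MFalse
| MImp (p q : mform)
| MBox (p : mform).

(* An ML Kripke model. Variables [e] and [e'] are identified iff e, e'
   are alpha-equivalent; hence the valuation must agree on them. *)
Record kmodel : Type := {
  KW : Type;
  KW_ne : inhabited KW;
  KR : KW -> KW -> Prop;
  Kval : atom -> KW -> bool;
  Kval_alpha : forall e e' w, alpha_eq e e' -> Kval (AB e) w = Kval (AB e') w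
}.

Fixpoint mholds (K : kmodel) (w : KW K) (p : mform) : Prop :=
  match p with
  | MVar a => Kval K a w = true
  | MFalse => False
  | MImp p q => mholds K w p -> mholds K w q
  | MBox p => forall w', KR K w w' -> mholds K w' p
  end.

Definition mentails (Gamma : mform -> Prop) (phi : mform) : Prop :=
  forall K : kmodel,
    (forall psi, Gamma psi -> forall w, mholds K w psi) ->
    forall w, mholds K w phi.

Fixpoint coal (e : expr) : mform :=
  match e with
  | ERig _ => MVar (AB e)
  | EFlex v => MVar (AV v)
  | EOp _ _ => MVar (AB e)
  | EEq _ _ => MVar (AB e)
  | EFalse => MFalse
  | EImp a b => MImp (coal a) (coal b)
  | EAll _ _ => MVar (AB e)
  | EBox a => MBox (coal a)
  end.

Definition coal_set (Gamma : expr -> Prop) : mform -> Prop :=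
  fun p => exists psi, Gamma psi /\ p = coal psi.

Fixpoint box_in (e : expr) (p : mform) : Prop :=
  match p with
  | MVar (AB e') => e' = e
  | MVar (AV _) | MFalse => False
  | MImp p q => box_in e p \/ box_in e q
  | MBox p => box_in e p
  end.

Definition Hset (Delta : expr -> Prop) : mform -> Prop :=
  fun f => exists e, (exists psi, Delta psi /\ box_in e (coal psi)) /\
                     rigid e /\
                     f = MImp (MVar (AB e)) (MBox (MVar (AB e))).

Definition union {A : Type} (P Q : A -> Prop) : A -> Prop := fun a => P a \/ Q a.
Definition add {A : Type} (P : A -> Prop) (x : A) : A -> Prop := fun a => P a \/ a = x.

(* Every FOML model M induces an ML model on the same frame: a propositional
   variable [e] is true at w iff e is true at w in M, and a flexible variable
   v iff its value at w is tt.  Coalescing then commutes with truth, since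
   the translation only descends through FALSE, implication and nabla, whose
   FOML semantics is the propositional/modal one.  The valuation respects
   alpha-equivalence because alpha-equivalent expressions have equal values,
   and it validates every axiom [e] => nabla [e] of H with e rigid because a
   rigid expression has the same value in every state.  So a countermodel to
   the FOML consequence yields one to the ML consequence. *)

From Stdlib Require Import List Classical FunctionalExtensionality PropExtensionality.
Import ListNotations.

Section ExprInd.
Variable P : expr -> Prop.
Hypothesis P_rig : forall x, P (ERig x).
Hypothesis P_flex : forall v, P (EFlex v).
Hypothesis P_op : forall o l, Forall P l -> P (EOp o l).
Hypothesis P_eq : forall a b, P a -> P b -> P (EEq a b).
Hypothesis P_false : P EFalse.
Hypothesis P_imp : forall a b, P a -> P b -> P (EImp a b).
Hypothesis P_all : forall x a, P a -> P (EAll x a).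
Hypothesis P_box : forall a, P a -> P (EBox a).

Fixpoint expr_ind_nested (e : expr) : P e :=
  match e with
  | ERig x => P_rig x
  | EFlex v => P_flex v
  | EOp o l => P_op o l ((fix args (l : list expr) : Forall P l :=
       match l with
       | [] => Forall_nil P
       | a :: l' => Forall_cons a (expr_ind_nested a) (args l')
       end) l)
  | EEq a b => P_eq a b (expr_ind_nested a) (expr_ind_nested b)
  | EFalse => P_false
  | EImp a b => P_imp a b (expr_ind_nested a) (expr_ind_nested b)
  | EAll x a => P_all x a (expr_ind_nested a)
  | EBox a => P_box a (expr_ind_nested a)
  end.
End ExprInd.

Section Semantics.
Variable M : model.

Lemma eval_all_ext (x y : nat) (a b : expr) (s t : nat -> U M) (w w' : W M) :
  (forall d, eval M a (upd s x d) w = eval M b (upd t y d) w') ->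
  eval M (EAll x a) s w = eval M (EAll y b) t w'.
Proof.
  intro Hab; simpl.
  destruct (dec _) as [Ha | Ha], (dec _) as [Hb | Hb]; auto; exfalso.
  - apply Hb; intro d; rewrite <- Hab; auto.
  - apply Ha; intro d; rewrite Hab; auto.
Qed.

Lemma eval_rigid_state_indep (e : expr) :
  rigid e -> forall s w w', eval M e s w = eval M e s w'.
Proof.
  induction e using expr_ind_nested; simpl; intros Hr s w w'; try tauto.
  - f_equal. induction H as [| a l Ha _ IHl]; simpl in *; auto.
    destruct Hr; f_equal; auto.
  - destruct Hr; rewrite (IHe1 H s w w'), (IHe2 H0 s w w'); reflexivity.
  - destruct Hr; rewrite (IHe1 H s w w'), (IHe2 H0 s w w'); reflexivity.
  - apply eval_all_ext; auto.
Qed.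

Lemma sat_rigid_state_indep (e : expr) :
  rigid e -> forall w w', sat M w e -> sat M w' e.
Proof.
  unfold sat; intros Hr w w'; rewrite (eval_rigid_state_indep e Hr _ w w'); auto.
Qed.

Lemma eval_alpha_env (e1 : expr) :
  forall env e2 s1 s2 w,
  (forall x y, varrel env x y -> s1 x = s2 y) -> alpha_env env e1 e2 ->
  eval M e1 s1 w = eval M e2 s2 w.
Proof.
  induction e1 using expr_ind_nested;
    intros env e2 s1 s2 w Hs Ha; destruct e2; simpl in *; try tauto.
  - auto.
  - subst; auto.
  - destruct Ha as [<- Hl]. f_equal.
    revert args Hl. induction H as [| a l Ha IHa IHl]; intros [| b l2] Hl;
      simpl in *; try tauto.
    destruct Hl; f_equal; eauto.
  - destruct Ha as [Ha Hb].
    rewrite (IHe1_1 env _ s1 s2 w Hs Ha), (IHe1_2 env _ s1 s2 w Hs Hb); reflexivity.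
  - destruct Ha as [Ha Hb].
    rewrite (IHe1_1 env _ s1 s2 w Hs Ha), (IHe1_2 env _ s1 s2 w Hs Hb); reflexivity.
  - apply eval_all_ext; intro d. apply (IHe1 ((x, x0) :: env)); auto.
    intros u v Huv; unfold upd; simpl in Huv.
    destruct Huv as [[-> ->] | [Hu [Hv Huv]]].
    + rewrite !PeanoNat.Nat.eqb_refl; reflexivity.
    + apply PeanoNat.Nat.eqb_neq in Hu, Hv; rewrite Hu, Hv; auto.
  - f_equal. apply functional_extensionality; intro u.
    apply propositional_extensionality.
    split; intros [w' [HR ->]]; exists w'; split; eauto.
    symmetry; eauto.
Qed.

Lemma eval_alpha (e e' : expr) (s : nat -> U M) (w : W M) :
  alpha_eq e e' -> eval M e s w = eval M e' s w.
Proof. apply eval_alpha_env; simpl; congruence. Qed.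

Lemma sat_imp (w : W M) (a b : expr) :
  sat M w (EImp a b) <-> (sat M w a -> sat M w b).
Proof.
  unfold sat; simpl.
  destruct (dec _) as [H | H]; split; intro Hab.
  - destruct H; tauto.
  - reflexivity.
  - exfalso; apply (tt_ff M); auto.
  - exfalso; apply H.
    destruct (classic (eval M a (xi M) w = tt M)); tauto.
Qed.

Lemma sat_box (w : W M) (a : expr) :
  sat M w (EBox a) <-> (forall w', R M w w' -> sat M w' a).
Proof.
  unfold sat; simpl; rewrite nab_spec. split.
  - intros H w' HR; apply H; eauto.
  - intros H u [w' [HR ->]]; auto.
Qed.

End Semantics.

Definition truth (P : Prop) : bool := if dec P then true else false.

Lemma truth_spec (P : Prop) : truth P = true <-> P.
Proof. unfold truth; destruct (dec P); split; auto; discriminate. Qed.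

Definition induced_val (M : model) (a : atom) (w : W M) : bool :=
  match a with
  | AV v => truth (zeta M v w = tt M)
  | AB e => truth (sat M w e)
  end.

Lemma induced_val_alpha (M : model) (e e' : expr) (w : W M) :
  alpha_eq e e' -> induced_val M (AB e) w = induced_val M (AB e') w.
Proof.
  intro Ha; unfold induced_val, sat.
  rewrite (eval_alpha M e e' (xi M) w Ha); reflexivity.
Qed.

Definition induced_kmodel (M : model) : kmodel :=
  {| KW := W M; KW_ne := W_ne M; KR := R M;
     Kval := induced_val M; Kval_alpha := induced_val_alpha M |}.

Lemma induced_holds_coal (M : model) (e : expr) (w : W M) :
  mholds (induced_kmodel M) w (coal e) <-> sat M w e.
Proof.
  revert w; induction e; intro w; simpl;
    [apply truth_spec .. | | | apply truth_spec |].
  - unfold sat; simpl; split; [tauto | intro H; apply (tt_ff M); auto].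
  - rewrite sat_imp, IHe1, IHe2; tauto.
  - rewrite sat_box; split; intros H w' HR; apply IHe; auto.
Qed.

Lemma induced_holds_rigid_box (M : model) (e : expr) (w : W M) :
  rigid e -> mholds (induced_kmodel M) w (MImp (MVar (AB e)) (MBox (MVar (AB e)))).
Proof.
  intros Hr He w' _.
  apply (proj2 (truth_spec _)), (sat_rigid_state_indep M e Hr w),
        (proj1 (truth_spec _)), He.
Qed.

Theorem theorem2 (ar : nat -> nat) (Gamma : expr -> Prop) (phi : expr) :
  (forall psi, Gamma psi -> wf ar psi) -> wf ar phi ->
  mentails (union (coal_set Gamma) (Hset (add Gamma phi))) (coal phi) ->
  entails Gamma phi.
Proof.
  intros _ _ Hml M HGamma w.
  apply induced_holds_coal, (Hml (induced_kmodel M)).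
  intros p [[psi [Hpsi ->]] | [e [_ [Hr ->]]]] w'.
  - apply induced_holds_coal, HGamma, Hpsi.
  - apply induced_holds_rigid_box, Hr.
Qed.
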